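(* Let $F$ be a forest and $\alpha:V(F)\to\mathbb{N}$. Suppose $X_{F^\alpha}$ is not 2-$s$-positive, and that $T$ is the unique connected component of $F^\alpha$ with $X_T$ not 2-$s$-positive. If $T$ is bipartite with bipartition class sizes $(r+2,r)$ for some $r\ge1$, then $F^\alpha$ has no isolated vertices.
   Context: Clan graph $F^\alpha$: replace each vertex $v$ by a clique $K_{\alpha(v)}$ and join all vertices of the cliques of adjacent vertices. $X_H$ is Stanley's chromatic symmetric function of a graph $H$: $X_H=\sum_\kappa\prod_{v}x_{\kappa(v)}$ over proper colorings $\kappa:V(H)\to\mathbb{Z}_{>0}$. A symmetric function $f$ is 2-$s$-positive if $[s_\lambda]f\ge0$ for all partitions $\lambda$ with at most two parts ($s_\lambda$ Schur functions). *)

From HB Require Import structures.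
From mathcomp Require Import all_boot all_order all_algebra.
From mathcomp Require Import mpoly.
Set Implicit Arguments. Unset Strict Implicit. Unset Printing Implicit Defensive.
Import Order.TTheory GRing.Theory.
Local Open Scope ring_scope.

Definition simple_graph (V : finType) (e : rel V) : Prop :=
  ssrbool.symmetric e /\ ssrbool.irreflexive e.

Definition has_cycle (V : finType) (e : rel V) : Prop :=
  exists s : seq V, [&& (2 < size s)%N, uniq s & cycle e s].

Definition forest (V : finType) (e : rel V) : Prop :=
  simple_graph e /\ ~ has_cycle e.

(* Clan graph F^alpha: vertex v replaced by the clique K_{alpha v};
   vertex set = pairs (v, i) with i < alpha v. *)
Definition clan_vertex (V : finType) (alpha : V -> nat) : finType :=
  {v : V & 'I_(alpha v)}.

Definition clan_rel (V : finType) (e : rel V) (alpha : V -> nat)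
    : rel (clan_vertex alpha) :=
  fun x y => ((tag x == tag y) && (x != y)) || e (tag x) (tag y).
Arguments clan_rel {V} e alpha.

Definition proper (V : finType) (e : rel V) (n : nat) (k : {ffun V -> 'I_n}) :=
  [forall x, forall y, e x y ==> (k x != k y)].

(* Stanley's chromatic symmetric function X_H specialised to n variables
   x_0, ..., x_{n-1} (all other variables set to 0). *)
Definition chrom (V : finType) (e : rel V) (n : nat) : {mpoly int[n]} :=
  \sum_(k : {ffun V -> 'I_n} | proper e k) \prod_(v : V) 'X_(k v).
Arguments chrom {V} e n.

Definition vdm (n : nat) : {mpoly int[n]} :=
  \prod_(i < n) \prod_(j < n | (i < j)%N) ('X_i - 'X_j).

(* Coefficient of the Schur function s_(a,b) (a >= b >= 0) in a symmetric
   polynomial f in n >= 2 variables, via Jacobi's bialternant definition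
   s_lambda = a_{lambda+delta} / a_delta: since
   a_delta * f = sum_lambda [s_lambda]f * a_{lambda+delta}, the coefficient
   [s_lambda]f is the coefficient of x^{lambda+delta} in a_delta * f,
   where delta = (n-1, n-2, ..., 0). *)
Definition schur2_coef (n : nat) (f : {mpoly int[n]}) (a b : nat) : int :=
  (vdm n * f)@_[multinom (nth 0%N [:: a; b] i + (n.-1 - i))%N | i < n].
Arguments schur2_coef {n} f a b.

(* We use #|V| + 2 variables, which is enough to determine
   every Schur coefficient of X_H (homogeneous of degree #|V|). *)
Definition two_s_positive (V : finType) (e : rel V) : Prop :=
  forall a b : nat, (b <= a)%N -> 0 <= schur2_coef (chrom e #|V|.+2) a b.

Definition is_component (V : finType) (e : rel V) (C : {set V}) : Prop :=
  exists x, C = [set y | connect e x y].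

Definition induced (V : finType) (e : rel V) (C : {set V})
    : rel {x : V | x \in C} :=
  fun x y => e (val x) (val y).
Arguments induced {V} e C.

Definition bipartite_sizes (V : finType) (e : rel V) (C : {set V}) (p q : nat)
    : Prop :=
  exists A : {set V}, [/\ A \subset C, #|A| = p, #|C :\: A| = q &
    forall x y, x \in C -> y \in C -> e x y -> ((x \in A) != (y \in A))].

Definition no_isolated (V : finType) (e : rel V) : Prop :=
  forall x, exists y, e x y.
Arguments proper {V} e {n} k.

From Pilot Require Import Defs.
From HB Require Import structures.
From mathcomp Require Import all_boot all_order all_algebra.
From mathcomp Require Import mpoly.
From mathcomp Require Import zify ring.
Set Implicit Arguments. Unset Strict Implicit. Unset Printing Implicit Defensive.
Import Order.TTheory GRing.Theory Num.Theory.
Local Open Scope ring_scope.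

(* For a graph G on n vertices let c_j count the proper colourings of G with the two
   colours {true, false} in which exactly j vertices are true, and
   B_G = sum_j c_j x^j. Expanding the Vandermonde product as a sum over
   tournaments, the exponent lambda + delta of a two-row partition lambda = (a, b)
   forces every pair except (0, 1) to be oriented as in the staircase delta, so
   [s_(a,b)] X_G = c_a - c_(a+1) for b > 0 (and c_n for b = 0): G is 2-s-positive
   iff B_G is nonincreasing on its upper half.
   B is multiplicative over unions of components, equals x^p + x^q on a connected
   bipartite graph with classes of sizes p and q, vanishes on a non-bipartite one,
   and is 1 + x on an isolated vertex. Hence every 2-s-positive component has
   |p - q| <= 1. If F^alpha had an isolated vertex, B_(F^alpha) would be
   (1 + x)(x^(r+2) + x^r) = x^r + x^(r+1) + x^(r+2) + x^(r+3) times such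
   balanced factors; these products stay palindromic and unimodal, so F^alpha
   would be 2-s-positive. *)

Section Tournaments.
Variable N : nat.

(* [t (i, j)] for [i < j] says that the factor [x_i - x_j] of the Vandermonde
   product contributes [x_i]. The values of [t] on the other pairs are junk:
   the sign of [t] vanishes unless they are all [true]. *)
Definition tournament := {ffun 'I_N * 'I_N -> bool}.

Definition winner (t : tournament) (p : 'I_N * 'I_N) : 'I_N :=
  if t p then p.1 else p.2.

Definition tourn_sign (t : tournament) : int :=
  \prod_(p : 'I_N * 'I_N) if (p.1 < p.2)%N then (-1) ^+ ~~ t p else (t p)%:R.

Definition tourn_score (t : tournament) : 'X_{1..N} :=
  (\sum_(p : 'I_N * 'I_N | (p.1 < p.2)%N) U_(winner t p))%MM.

Lemma vdm_tournamentE :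
  vdm N = \sum_(t : tournament) tourn_sign t *: 'X_[tourn_score t].
Proof.
pose term (p : 'I_N * 'I_N) (b : bool) : {mpoly int[N]} :=
  (if (p.1 < p.2)%N then (-1) ^+ ~~ b else b%:R)
  *: 'X_[if (p.1 < p.2)%N then U_(if b then p.1 else p.2)%MM else 0%MM].
transitivity (\prod_(p : 'I_N * 'I_N) \sum_(b : bool) term p b).
  rewrite /vdm pair_big_dep big_mkcond /=; apply: eq_bigr => p _.
  rewrite big_bool /term; case: ifP => _ /=.
    by rewrite scale1r scaleN1r.
  by rewrite scale1r scale0r mpolyX0 addr0.
rewrite bigA_distr_bigA /=; apply: eq_bigr => t _.
by rewrite scaler_prod mprodXE /tourn_score [in RHS]big_mkcond.
Qed.

Lemma tourn_scoreE (t : tournament) (j : 'I_N) : tourn_score t j =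
  (\sum_(i < N) \sum_(k < N) ((i < k) && (winner t (i, k) == j)))%N.
Proof.
rewrite /tourn_score mnm_sumE big_mkcond pair_big /=.
by apply: eq_bigr => [[i k]] _ /=; case: (i < k)%N; rewrite ?mnm1E.
Qed.

Lemma sum_ord_gt (j : 'I_N) : (\sum_(k < N) (j < k))%N = (N.-1 - j)%N.
Proof.
transitivity (count (fun k => j < k)%N (index_iota 0 N)).
  rewrite -(big_mkord xpredT (fun k => nat_of_bool (j < k)%N)) -sum1_count.
  by rewrite [RHS]big_mkcond /=; apply: eq_bigr => k _; case: ltnP.
rewrite /index_iota subn0.
have := count_predC (fun k => j < k)%N (iota 0 N).
have -> : count (predC (fun k => j < k)%N) (iota 0 N) = j.+1.
  by rewrite -size_filter (eq_filter (a2 := fun k => k <= 0 + j)%N)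
             ?filter_iota_leq ?size_iota // => k /=; rewrite -leqNgt.
by rewrite size_iota; lia.
Qed.

Lemma tourn_win_lower (t : tournament) (j : 'I_N) :
  (forall k : 'I_N, (j < k)%N -> t (j, k)) ->
  (tourn_score t j <= N.-1 - j)%N -> forall i : 'I_N, (i < j)%N -> t (i, j).
Proof.
move=> win_upper score_j i lt_ij; apply/negPn/negP => lost.
suff : (N.-1 - j + 1 <= tourn_score t j)%N by lia.
rewrite tourn_scoreE (bigD1 j) //= -sum_ord_gt leq_add //.
  apply: leq_sum => k _; case: ltnP => //= lt_jk.
  by rewrite /winner win_upper //= eqxx.
rewrite (bigD1 i) /=; last by rewrite neq_ltn lt_ij.
by rewrite (bigD1 j) //= lt_ij /winner (negbTE lost) eqxx -addnA leq_addr.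
Qed.

Lemma tourn_top_forced (t : tournament) :
  (forall j : 'I_N, (2 <= j)%N -> (tourn_score t j <= N.-1 - j)%N) ->
  forall p : 'I_N * 'I_N, (p.1 < p.2)%N -> (2 <= p.2)%N -> t p.
Proof.
move=> score_top; suff win : forall d (j : 'I_N), (N - j <= d)%N ->
    (2 <= j)%N -> forall i : 'I_N, (i < j)%N -> t (i, j).
  by move=> [i j] /= lt_ij le2j; apply: (win N) => //; lia.
elim=> [|d IHd] j le_Nj le2j; first by have := ltn_ord j; lia.
apply: tourn_win_lower; last exact: score_top.
by move=> k lt_jk; apply: IHd; have := ltn_ord k; lia.
Qed.
End Tournaments.

Section TopTournaments.
Variable n : nat.
Local Notation N := n.+2.

Definition ord_one : 'I_N := Ordinal (isT : 1 < N)%N.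

Definition tourn_id : tournament N := [ffun => true].
Definition tourn_swap : tournament N := [ffun p => p != (ord0, ord_one)].

Lemma tourn_swap_neq_id : tourn_swap != tourn_id.
Proof. by apply/eqP => /ffunP /(_ (ord0, ord_one)); rewrite !ffunE eqxx. Qed.

Lemma tourn_sign_id : tourn_sign tourn_id = 1.
Proof. by apply: big1 => p _; rewrite ffunE; case: ifP. Qed.

Lemma tourn_sign_swap : tourn_sign tourn_swap = -1.
Proof.
rewrite /tourn_sign (bigD1 (ord0, ord_one)) //= big1 ?mulr1; first by rewrite ffunE eqxx.
by move=> p p_neq; rewrite ffunE p_neq; case: ifP.
Qed.

Lemma tourn_sign_eq0 (t : tournament N) (p : 'I_N * 'I_N) :
  ~~ (p.1 < p.2)%N -> ~~ t p -> tourn_sign t = 0.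
Proof.
move=> p_junk tpF; rewrite /tourn_sign (bigD1 p) //=.
by rewrite (negbTE p_junk) (negbTE tpF) mul0r.
Qed.

Lemma tourn_score_id (j : 'I_N) : tourn_score tourn_id j = (N.-1 - j)%N.
Proof.
rewrite tourn_scoreE (bigD1 j) //= [X in (_ + X)%N]big1 ?addn0.
  rewrite -(sum_ord_gt j); apply: eq_bigr => k _.
  by rewrite /winner ffunE eqxx andbT.
move=> i neq_ij; apply: big1 => k _.
by rewrite /winner ffunE /= (negbTE neq_ij) andbF.
Qed.

Lemma tourn_score_swap (j : 'I_N) :
  (tourn_score tourn_swap j + (ord0 == j) = tourn_score tourn_id j + (ord_one == j))%N.
Proof.
rewrite /tourn_score !mnm_sumE (bigD1 (ord0, ord_one)) //=.
rewrite [in RHS](bigD1 (ord0, ord_one)) //= /winner !ffunE eqxx /= !mnm1E.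
set S_swap := (\sum_(p | _) _)%N; set S_id := (\sum_(p | _) _)%N.
have -> : S_swap = S_id by apply: eq_bigr => p /andP[_ p_neq]; rewrite !ffunE p_neq.
by lia.
Qed.

Lemma tourn_id_or_swap (t : tournament N) :
  (forall p : 'I_N * 'I_N, ~~ (p.1 < p.2)%N -> t p) ->
  (forall p : 'I_N * 'I_N, (p.1 < p.2)%N -> (2 <= p.2)%N -> t p) ->
  t = tourn_id \/ t = tourn_swap.
Proof.
move=> t_junk t_top.
have t_other p : p != (ord0, ord_one) -> t p.
  move: p => [i k] neq_p; have [lt_ik|] := boolP (i < k)%N; last exact: (t_junk (i, k)).
  apply: t_top => //=; case: (ltnP 1 k) => // le_k1; case/negP: neq_p.
  by apply/eqP; congr pair; apply: val_inj => /=; lia.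
have [t01|t01] := boolP (t (ord0, ord_one)); [left|right];
  apply/ffunP => p; rewrite !ffunE; have [->|/t_other ->] := eqVneq p (ord0, ord_one);
  by [|exact/negbTE].
Qed.
End TopTournaments.

Lemma sum_nat_indicator (I : finType) (P A : pred I) :
  \sum_(i | P i) (A i)%:R = #|[set i | P i && A i]|%:R :> int.
Proof.
rewrite -natr_sum cardsE -sum1_card big_mkcondr /=.
by congr _%:R; apply: eq_bigr => i _; case: (A i).
Qed.

Section Bicolourings.
Variables (T : finType) (e : rel T).

(* Colourings of [U] are stored as functions on all of [T], [false] outside
   [U], so that colourings of disjoint sets can be merged. *)
Definition bicolouring (U : {set T}) (k : {ffun T -> bool}) : bool :=
  [forall x, (x \notin U) ==> ~~ k x] &&
  [forall x in U, forall y in U, e x y ==> (k x != k y)].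

Definition bicolour_poly (U : {set T}) : {poly int} :=
  \sum_(k | bicolouring U k) 'X^#|[set x | k x]|.

Lemma bicolouringP (U : {set T}) (k : {ffun T -> bool}) :
  reflect ((forall x, x \notin U -> k x = false) /\
           (forall x y, x \in U -> y \in U -> e x y -> k x != k y))
          (bicolouring U k).
Proof.
apply: (iffP andP) => [[/forallP out /forallP edge]|[out edge]]; split.
- by move=> x /(implyP (out x)) /negbTE.
- move=> x y xU yU.
  by move: (edge x) => /implyP/(_ xU)/forallP/(_ y)/implyP/(_ yU)/implyP.
- by apply/forallP => x; apply/implyP => /out ->.
- by apply/forallP => x; apply/implyP => xU; apply/forallP => y; apply/implyP => yU;
    apply/implyP; apply: edge.
Qed.

Lemma bicolouring_out U k x : bicolouring U k -> x \notin U -> k x = false.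
Proof. by case/bicolouringP => out _; apply: out. Qed.

Lemma bicolouring_edge U k x y :
  bicolouring U k -> x \in U -> y \in U -> e x y -> k x != k y.
Proof. by case/bicolouringP => _; apply. Qed.

Lemma bicolouring_sub U k : bicolouring U k -> [set x | k x] \subset U.
Proof.
move=> k_bic; apply/subsetP => x; rewrite inE.
by apply: contraTT => /(bicolouring_out k_bic) ->.
Qed.

Lemma coef_bicolour_poly U j : (bicolour_poly U)`_j =
  #|[set k | bicolouring U k & #|[set x | k x]| == j]|%:R.
Proof.
rewrite /bicolour_poly coef_sum -sum_nat_indicator.
by apply: eq_bigr => k _; rewrite coefXn eq_sym.
Qed.

Lemma bicolour_poly_coef_ge0 (U : {set T}) j :
  0 <= (bicolour_poly U)`_j.
Proof. by rewrite coef_bicolour_poly ler0n. Qed.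

Lemma bicolour_poly_coef_gt (U : {set T}) j :
  (#|U| < j)%N -> (bicolour_poly U)`_j = 0.
Proof.
move=> lt_Uj; rewrite coef_bicolour_poly; apply/eqP; rewrite pnatr_eq0 cards_eq0.
apply/eqP/setP => k; rewrite !inE; apply/negbTE/andP => -[k_bic /eqP card_k].
by have := subset_leq_card (bicolouring_sub k_bic); rewrite card_k leqNgt lt_Uj.
Qed.

Lemma bicolour_poly0 : bicolour_poly set0 = 1.
Proof.
have bic0 : bicolouring set0 [ffun => false].
  by apply/bicolouringP; split=> [x _|x y]; rewrite ?ffunE ?inE.
rewrite /bicolour_poly (bigD1 [ffun => false]) //= big1 ?addr0.
  by rewrite (_ : [set x | _] = set0) ?cards0 ?expr0 //; apply/setP => x; rewrite !inE ffunE.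
move=> k /andP[k_bic k_neq]; case/eqP: k_neq; apply/ffunP => x.
by rewrite ffunE (bicolouring_out k_bic) ?inE.
Qed.

Definition restrict (A : {set T}) (k : {ffun T -> bool}) : {ffun T -> bool} :=
  [ffun x => (x \in A) && k x].

Lemma bicolouring_restrict (A U : {set T}) k :
  A \subset U -> bicolouring U k -> bicolouring A (restrict A k).
Proof.
move=> sAU k_bic; apply/bicolouringP; split=> [x xA|x y xA yA xy].
  by rewrite ffunE (negbTE xA).
rewrite !ffunE xA yA /=.
by apply: bicolouring_edge k_bic _ _ xy; apply: (subsetP sAU).
Qed.

End Bicolourings.

Section BicolourPolyUnion.
Variables (T : finType) (e : rel T).
Hypothesis e_sym : ssrbool.symmetric e.
Variables U1 U2 : {set T}.
Hypothesis U12_disj : [disjoint U1 & U2].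
Hypothesis U12_noedge : forall x y, x \in U1 -> y \in U2 -> ~~ e x y.

Lemma bicolouring_merge (k1 k2 : {ffun T -> bool}) :
  bicolouring e U1 k1 -> bicolouring e U2 k2 ->
  bicolouring e (U1 :|: U2) [ffun x => k1 x || k2 x].
Proof.
move=> k1_bic k2_bic; have out1 := bicolouring_out k1_bic.
have out2 := bicolouring_out k2_bic.
apply/bicolouringP; split=> [x|x y].
  by rewrite inE negb_or ffunE => /andP[/out1 -> /out2 ->].
rewrite !inE !ffunE => /orP[xU|xU] /orP[yU|yU] xy.
- rewrite !out2 ?orbF ?(disjointFr U12_disj xU) ?(disjointFr U12_disj yU) //.
  exact: bicolouring_edge k1_bic xU yU xy.
- by rewrite (negbTE (U12_noedge xU yU)) in xy.
- by rewrite e_sym (negbTE (U12_noedge yU xU)) in xy.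
- rewrite !out1 ?(disjointFl U12_disj xU) ?(disjointFl U12_disj yU) //.
  exact: bicolouring_edge k2_bic xU yU xy.
Qed.

Lemma bicolour_polyU :
  bicolour_poly e (U1 :|: U2) = bicolour_poly e U1 * bicolour_poly e U2.
Proof.
rewrite /bicolour_poly big_distrlr pair_big_dep /=.
pose merge (k : {ffun T -> bool} * {ffun T -> bool}) := [ffun x => k.1 x || k.2 x].
rewrite (reindex_onto merge (fun k => (restrict U1 k, restrict U2 k))) /=; last first.
  move=> k k_bic; apply/ffunP => x; rewrite !ffunE -andb_orl -in_setU.
  by have [//|/(bicolouring_out k_bic) ->] := boolP (x \in U1 :|: U2); rewrite andbF.
apply: eq_big => [[k1 k2]|[k1 k2] /andP[_ /eqP[k1E k2E]]] /=.
  apply/andP/andP => [[k_bic /eqP[k1E k2E]]|[k1_bic k2_bic]].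
    by split; [rewrite -k1E | rewrite -k2E];
      apply: bicolouring_restrict k_bic; rewrite ?subsetUl ?subsetUr.
  split; first exact: bicolouring_merge.
  apply/eqP; congr pair; apply/ffunP => x; rewrite !ffunE /=.
    have [xU|xU] := boolP (x \in U1); last by rewrite (bicolouring_out k1_bic).
    by rewrite (bicolouring_out k2_bic) ?orbF // (disjointFr U12_disj xU).
  have [xU|xU] := boolP (x \in U2); last by rewrite (bicolouring_out k2_bic).
  by rewrite (bicolouring_out k1_bic) // (disjointFl U12_disj xU).
have k1U x : k1 x -> x \in U1 by rewrite -k1E ffunE => /andP[].
have k2U x : k2 x -> x \in U2 by rewrite -k2E ffunE => /andP[].
have -> : [set x | merge (k1, k2) x] = [set x | k1 x] :|: [set x | k2 x].
  by apply/setP => x; rewrite !inE ffunE.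
rewrite -exprD -cardsUI (_ : _ :&: _ = set0) ?cards0 ?addn0 //.
apply/setP => x; rewrite !inE; apply/negbTE/andP => -[/k1U x1 /k2U x2].
by rewrite (disjointFr U12_disj x1) in x2.
Qed.
End BicolourPolyUnion.

Section Components.
Variables (T : finType) (e : rel T).
Hypothesis e_sym : ssrbool.symmetric e.

Definition component (x : T) : {set T} := [set y | connect e x y].

Lemma component_refl x : x \in component x.
Proof. by rewrite inE connect0. Qed.

Lemma component_closed x : closed e (component x).
Proof.
by move=> y z yz; rewrite !inE; apply: connect_closed (sym_connect_sym e_sym) _ _ _ yz.
Qed.

Lemma bicolour_polyID (U A : {set T}) : closed e A ->
  bicolour_poly e U = bicolour_poly e (U :&: A) * bicolour_poly e (U :\: A).
Proof.
move=> A_closed; rewrite -bicolour_polyU ?setID //.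
  by rewrite -setI_eq0 setIDA setIAC setDIl setDv setI0.
move=> x y /setIP[_ xA] /setDP[_ yA]; apply: contraNN yA => xy.
by rewrite -(A_closed _ _ xy).
Qed.

Definition flip_on (K : {set T}) (k : {ffun T -> bool}) : {ffun T -> bool} :=
  [ffun x => (x \in K) && ~~ k x].

Lemma bicolouring_component_flip x (k0 k1 : {ffun T -> bool}) :
  bicolouring e (component x) k0 -> bicolouring e (component x) k1 ->
  k1 = k0 \/ k1 = flip_on (component x) k0.
Proof.
move=> k0_bic k1_bic; set K := component x.
pose same y := (k1 y == k0 y) == (k1 x == k0 x).
have same_closed : closed e [pred y | (y \in K) ==> same y].
  move=> y z yz; have := component_closed x yz; rewrite !inE.
  have [xy xz|_ <-] := boolP (connect e x y); last by [].
  have yK : y \in K by rewrite inE.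
  have zK : z \in K by rewrite inE -xz.
  rewrite -xz /=.
  move: (bicolouring_edge k0_bic yK zK yz) (bicolouring_edge k1_bic yK zK yz).
  by rewrite /same; case: (k0 y); case: (k0 z); case: (k1 y); case: (k1 z).
have same_K y : y \in K -> same y.
  move=> yK; have xy : connect e x y by rewrite inE in yK.
  have := closed_connect same_closed xy.
  by rewrite !inE connect0 xy /same eqxx => /esym.
have [s|s] := boolP (k1 x == k0 x); [left|right]; apply/ffunP => y; rewrite ?ffunE;
  (have [yK|yK] := boolP (y \in K);
   last by rewrite !(bicolouring_out k0_bic, bicolouring_out k1_bic)).
  by move: (same_K y yK); rewrite /same s => /eqP/eqP.
by move: (same_K y yK); rewrite /same (negbTE s); case: (k1 y); case: (k0 y).
Qed.

Lemma bicolour_poly_component x k :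
  bicolouring e (component x) k -> bicolour_poly e (component x) =
  'X^#|[set y | k y]| + 'X^(#|component x| - #|[set y | k y]|).
Proof.
move=> k_bic; set K := component x.
have flip_bic : bicolouring e K (flip_on K k).
  apply/bicolouringP; split=> [y yK|y z yK zK yz]; first by rewrite ffunE (negbTE yK).
  rewrite !ffunE yK zK /=; move: (bicolouring_edge k_bic yK zK yz).
  by case: (k y); case: (k z).
have flip_neq : flip_on K k != k.
  by apply/eqP => /ffunP /(_ x); rewrite ffunE component_refl; case: (k x).
have card_flip : #|[set y | flip_on K k y]| = (#|K| - #|[set y | k y]|)%N.
  rewrite -(cardsID [set y | k y] K) (setIidPr (bicolouring_sub k_bic)) addKn.
  apply: eq_card => y.
  by rewrite inE ffunE !inE andbC.
rewrite /bicolour_poly (bigD1 k) // (bigD1 (flip_on K k)) /=; last first.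
  by rewrite flip_bic flip_neq.
rewrite big1 ?addr0 ?card_flip // => k' /andP[/andP[k'_bic k'_neq] k'_neq'].
by case: (bicolouring_component_flip k_bic k'_bic) => k'E; rewrite k'E eqxx in k'_neq k'_neq'.
Qed.

Lemma bicolour_poly_componentP x :
  bicolour_poly e (component x) = 0 \/ exists2 p, (p <= #|component x|)%N &
    bicolour_poly e (component x) = 'X^p + 'X^(#|component x| - p).
Proof.
have [k k_bic|no_bic] := pickP (bicolouring e (component x)); last first.
  by left; rewrite /bicolour_poly big_pred0.
right; exists #|[set y | k y]|; last exact: bicolour_poly_component.
exact: subset_leq_card (bicolouring_sub k_bic).
Qed.

Lemma bicolour_poly_bipartite C p q :
  is_component e C -> bipartite_sizes e C p q -> bicolour_poly e C = 'X^p + 'X^q.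
Proof.
move=> [x ->] [A [sAC cardA cardCA A_bip]]; rewrite -/(component x) in sAC cardCA A_bip *.
pose k := [ffun y => y \in A].
have k_bic : bicolouring e (component x) k.
  apply/bicolouringP; split=> [y yC|y z yC zC yz]; rewrite !ffunE.
    by apply: contraNF yC => /(subsetP sAC).
  exact: A_bip.
have cardk : #|[set y | k y]| = p by rewrite -cardA; apply: eq_card => y; rewrite inE ffunE.
rewrite (bicolour_poly_component k_bic) cardk -cardA -cardCA.
by rewrite -(cardsID A (component x)) (setIidPr sAC) addKn.
Qed.

Lemma component_isolated x : (forall y, ~~ e x y) -> component x = [set x].
Proof.
move=> x_iso; apply/setP => y; rewrite !inE.
apply/idP/eqP => [/connectP[[|z p] //= /andP[xz _] _]|->]; last exact: connect0.
by rewrite (negbTE (x_iso z)) in xz.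
Qed.

Lemma bicolour_poly_isolated x : (forall y, ~~ e x y) -> bicolour_poly e [set x] = 1 + 'X.
Proof.
move=> x_iso; have k_bic : bicolouring e (component x) [ffun => false].
  apply/bicolouringP; split=> [y|y z]; rewrite ?ffunE // component_isolated //.
  by rewrite !inE => /eqP-> /eqP->; rewrite (negbTE (x_iso x)).
rewrite -component_isolated // (bicolour_poly_component k_bic) component_isolated //.
rewrite cards1 (_ : [set _ | _] = set0) ?cards0 ?expr0 //.
by apply/setP => y; rewrite !inE ffunE.
Qed.
End Components.

Section InducedSubgraph.
Variables (T : finType) (e : rel T) (U : {set T}).
Local Notation W := {x : T | x \in U}.

Definition extend (kb : {ffun W -> bool}) : {ffun T -> bool} :=
  [ffun x => if insub x is Some w then kb w else false].

Lemma extend_val kb (w : W) : extend kb (val w) = kb w.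
Proof. by rewrite ffunE valK. Qed.

Lemma extend_out kb x : x \notin U -> extend kb x = false.
Proof. by move=> xU; rewrite ffunE insubF //; apply/negbTE. Qed.

Lemma card_extend kb : #|[set x | extend kb x]| = #|[set w | kb w]|.
Proof.
rewrite -(card_imset _ val_inj); apply: eq_card => x; rewrite !inE.
apply/idP/imsetP => [|[w]]; last by rewrite inE => kw ->; rewrite extend_val.
have [xU|/extend_out->//] := boolP (x \in U).
by rewrite -(SubK W xU) extend_val => kx; exists (Sub x xU); rewrite ?inE.
Qed.

Lemma bicolouring_extend kb :
  bicolouring e U (extend kb) = bicolouring (induced e U) [set: W] kb.
Proof.
apply/bicolouringP/bicolouringP => [[_ edge]|[_ edge]]; split.
- by move=> w; rewrite inE.
- by move=> w1 w2 _ _ w12; rewrite -!extend_val; apply: edge; rewrite ?(valP w1) ?(valP w2).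
- exact: extend_out.
- move=> x y xU yU xy; rewrite -(SubK W xU) -(SubK W yU) !extend_val.
  by apply: edge; rewrite ?inE /induced ?SubK.
Qed.

Lemma bicolour_poly_induced :
  bicolour_poly (induced e U) [set: W] = bicolour_poly e U.
Proof.
rewrite [RHS](reindex_onto extend (fun k => [ffun w : W => k (val w)])) /=.
  apply: eq_big => [kb|kb _]; last by rewrite card_extend.
  rewrite bicolouring_extend; case: bicolouring => //=; apply/esym/eqP/ffunP => w.
  by rewrite ffunE extend_val.
move=> k k_bic; apply/ffunP => x; have [xU|xU] := boolP (x \in U).
  by rewrite -(SubK W xU) extend_val ffunE.
by rewrite extend_out // (bicolouring_out k_bic).
Qed.
End InducedSubgraph.

Section SchurCoefficients.
Variables (W : finType) (e : rel W).
Local Notation n := #|W|.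
Local Notation N := n.+2.
Local Notation B := (bicolour_poly e [set: W]).

Definition content (k : {ffun W -> 'I_N}) : 'X_{1..N} := (\sum_v U_(k v))%MM.

Lemma contentE k (j : 'I_N) : content k j = #|[set v | k v == j]|.
Proof.
rewrite /content mnm_sumE -sum1_card [RHS]big_mkcond /=.
by apply: eq_bigr => v _; rewrite mnm1E inE.
Qed.

Definition bialternant_exponent (a b : nat) : 'X_{1..N} :=
  [multinom (nth 0%N [:: a; b] i + (N.-1 - i))%N | i < N].

Lemma sum_tourn_sign (c : 'X_{1..N}) a b :
  \sum_(t : tournament N)
      tourn_sign t * ((tourn_score t + c)%MM == bialternant_exponent a b)%:R =
  ((tourn_score (tourn_id n) + c)%MM == bialternant_exponent a b)%:R -
  ((tourn_score (tourn_swap n) + c)%MM == bialternant_exponent a b)%:R.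
Proof.
rewrite (bigD1 (tourn_id n)) //= (bigD1 (tourn_swap n)) /=; last first.
  by rewrite tourn_swap_neq_id.
rewrite tourn_sign_id tourn_sign_swap mul1r mulN1r big1 ?addr0 //.
move=> t /andP[t_neq_id t_neq_swap].
have [score_t|] := eqVneq (tourn_score t + c)%MM (bialternant_exponent a b);
  last by rewrite mulr0.
have [t_junk|] := boolP [forall p : 'I_N * 'I_N, ~~ (p.1 < p.2)%N ==> t p]; last first.
  rewrite negb_forall => /existsP[p]; rewrite negb_imply => /andP[p_junk tpF].
  by rewrite (tourn_sign_eq0 p_junk tpF) mul0r.
have score_top (j : 'I_N) : (2 <= j)%N -> (tourn_score t j <= N.-1 - j)%N.
  move=> le2j; have := congr1 (fun m : 'X_{1..N} => m j) score_t.
  rewrite /= mnmDE mnmE.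
  have -> : nth 0%N [:: a; b] j = 0%N by case: j le2j => [[|[|j]]] //= _ _; rewrite nth_nil.
  by rewrite /=; lia.
have [] := tourn_id_or_swap (fun p => implyP (forallP t_junk p)) (tourn_top_forced score_top).
  by move=> tE; rewrite tE eqxx in t_neq_id.
by move=> tE; rewrite tE eqxx in t_neq_swap.
Qed.

Lemma schur2_coef_content a b : schur2_coef (chrom e N) a b =
  \sum_(k | Defs.proper e k)
    (((tourn_score (tourn_id n) + content k)%MM == bialternant_exponent a b)%:R
     - ((tourn_score (tourn_swap n) + content k)%MM == bialternant_exponent a b)%:R).
Proof.
rewrite /schur2_coef -/(bialternant_exponent a b) vdm_tournamentE.
rewrite /chrom (eq_bigr (fun k => 'X_[content k])) => [|k _]; last by rewrite mprodXE.
rewrite mulr_suml raddf_sum /=.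
under eq_bigr => t _ do rewrite mulr_sumr raddf_sum /=.
rewrite exchange_big /=; apply: eq_bigr => k _.
rewrite -sum_tourn_sign; apply: eq_bigr => t _.
by rewrite -scalerAl -mpolyXD mcoeffZ mcoeffX.
Qed.

Lemma tourn_score_id_addE (c : 'X_{1..N}) a b :
  ((tourn_score (tourn_id n) + c)%MM == bialternant_exponent a b) =
  [forall j, c j == nth 0%N [:: a; b] j].
Proof.
apply/eqP/forallP => [/mnmP c_eq j|c_eq]; [|apply/mnmP => j];
  move: (c_eq j); rewrite mnmDE mnmE tourn_score_id => /eqP; lia.
Qed.

Lemma tourn_score_swap_addE (c : 'X_{1..N}) a b :
  ((tourn_score (tourn_swap n) + c)%MM == bialternant_exponent a b) =
  (0 < b)%N && [forall j, c j == nth 0%N [:: a.+1; b.-1] j].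
Proof.
have score_swap (j : 'I_N) : tourn_score (tourn_swap n) j =
    if val j == 0%N then n else if val j == 1%N then n.+1 else (N.-1 - j)%N.
  have := tourn_score_swap j; rewrite tourn_score_id.
  by case: j => [[|[|j]] lt_jN] /=; lia.
apply/eqP/andP => [/mnmP c_eq|[lt0b /forallP c_eq]].
  split; first by move: (c_eq (ord_one n)); rewrite mnmDE mnmE score_swap /=; lia.
  apply/forallP => j; move: (c_eq j); rewrite mnmDE mnmE score_swap.
  by case: j => [[|[|j]] lt_jN] /=; rewrite ?nth_nil; lia.
apply/mnmP => j; move: (c_eq j); rewrite mnmDE mnmE score_swap.
by case: j => [[|[|j]] lt_jN] /=; rewrite ?nth_nil; lia.
Qed.

Definition two_colouring (kb : {ffun W -> bool}) : {ffun W -> 'I_N} :=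
  [ffun v => if kb v then ord0 else ord_one n].

Lemma two_colouring_inj : injective two_colouring.
Proof.
move=> k1 k2 /ffunP k12; apply/ffunP => v; move: (k12 v); rewrite !ffunE.
by case: (k1 v); case: (k2 v).
Qed.

Lemma proper_two_colouring kb :
  Defs.proper e (two_colouring kb) = bicolouring e [set: W] kb.
Proof.
apply/forallP/bicolouringP => [proper_k|[_ edge] x]; last first.
  apply/forallP => y; apply/implyP => xy; rewrite !ffunE.
  by move: (edge x y (in_setT x) (in_setT y) xy); case: (kb x); case: (kb y).
split=> [x|x y _ _ xy]; first by rewrite inE.
move: (proper_k x) => /forallP/(_ y)/implyP/(_ xy); rewrite !ffunE.
by case: (kb x); case: (kb y).
Qed.

Lemma content_two_colouring kb (j : 'I_N) : content (two_colouring kb) j =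
  if val j == 0%N then #|[set v | kb v]|
  else if val j == 1%N then #|[set v | ~~ kb v]| else 0%N.
Proof.
rewrite contentE; case: j => [[|[|j]] lt_jN] /=.
- by apply: eq_card => v; rewrite !inE ffunE; case: (kb v).
- by apply: eq_card => v; rewrite !inE ffunE; case: (kb v).
- by apply/eqP; rewrite cards_eq0; apply/eqP/setP => v; rewrite !inE ffunE; case: (kb v).
Qed.

Lemma colourings_content_two_colours a b :
  [set k | Defs.proper e k & [forall j, content k j == nth 0%N [:: a; b] j]] =
  two_colouring @: [set kb | bicolouring e [set: W] kb &
                     (#|[set v | kb v]| == a) && (#|[set v | ~~ kb v]| == b)].
Proof.
apply/setP => k; rewrite inE; apply/andP/imsetP => [[k_proper /forallP k_content]|].
  have k_small (v : W) : (val (k v) < 2)%N.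
    case: ltnP => // le2; move: (k_content (k v)); rewrite contentE.
    have -> : nth 0%N [:: a; b] (k v) = 0%N.
      by case: (k v) le2 => [[|[|j]] ?] //= _; rewrite nth_nil.
    by rewrite cards_eq0 => /eqP/setP/(_ v); rewrite !inE eqxx.
  pose kb := [ffun v => k v == ord0].
  have kE : k = two_colouring kb.
    apply/ffunP => v; rewrite !ffunE; case: eqP => // /eqP k_neq0; apply: val_inj.
    by move: (k_small v) k_neq0; case: (k v) => [[|[|j]] ?].
  exists kb => //; rewrite inE -proper_two_colouring -kE k_proper.
  move: (k_content ord0) (k_content (ord_one n)).
  by rewrite kE !content_two_colouring /= => -> ->.
case=> kb; rewrite inE -proper_two_colouring => /andP[kb_proper /andP[/eqP ca /eqP cb]] ->.
split=> //; apply/forallP => j; rewrite content_two_colouring ca cb.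
by case: j => [[|[|j]] ?] //=; rewrite nth_nil.
Qed.

Lemma card_colourings_content a b :
  #|[set k | Defs.proper e k & [forall j, content k j == nth 0%N [:: a; b] j]]|%:R
  = if (a + b == n)%N then B`_a else 0 :> int.
Proof.
rewrite colourings_content_two_colours card_imset; last exact: two_colouring_inj.
have card_classes (kb : {ffun W -> bool}) :
    (#|[set v | kb v]| + #|[set v | ~~ kb v]|)%N = n.
  by rewrite -(cardsC [set v | kb v]); congr (_ + _)%N; apply: eq_card => v; rewrite !inE.
rewrite coef_bicolour_poly; case: eqP => [ab|ab].
  congr _%:R; apply: eq_card => kb; rewrite !inE; case: bicolouring => //=.
  have := card_classes kb; lia.
apply/eqP; rewrite pnatr_eq0 cards_eq0; apply/eqP/setP => kb; rewrite !inE.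
apply/negbTE/andP => -[_ /andP[/eqP ca /eqP cb]].
by have := card_classes kb; rewrite ca cb.
Qed.

Lemma schur2_coef_chromE a b : schur2_coef (chrom e N) a b =
  if (a + b == n)%N then (if b is 0 then B`_a else B`_a - B`_a.+1) else 0.
Proof.
rewrite schur2_coef_content sumrB.
under eq_bigr => k _ do rewrite tourn_score_id_addE.
under [X in _ - X]eq_bigr => k _ do rewrite tourn_score_swap_addE.
rewrite sum_nat_indicator card_colourings_content; case: b => [|b] /=.
  by rewrite big1 // subr0; case: eqP.
by rewrite sum_nat_indicator card_colourings_content addSnnS; case: eqP.
Qed.

End SchurCoefficients.

Definition upper_nonincreasing (h : {poly int}) (n : nat) : Prop :=
  forall i j, (i + j = n)%N -> (j <= i)%N -> h`_i.+1 <= h`_i.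

Definition palindromic_unimodal (h : {poly int}) (n : nat) : Prop :=
  [/\ forall i, (n < i)%N -> h`_i = 0,
      forall i j, (i + j = n)%N -> h`_i = h`_j
    & forall i j, (i + j = n)%N -> (j <= i)%N -> h`_i.+1 <= h`_i].

Lemma palindromic_unimodal0 n : palindromic_unimodal 0 n.
Proof. by split=> *; rewrite ?coef0. Qed.

Lemma palindromic_unimodalMXn h n q :
  palindromic_unimodal h n -> palindromic_unimodal (h * 'X^q) (n + 2 * q).
Proof.
case=> h_deg h_sym h_dec; split=> [i lt_ni|i j ij|i j ij le_ji]; rewrite !coefMXn.
- by case: ifP => // _; apply: h_deg; lia.
- case: (ltnP i q) => lt_iq; case: (ltnP j q) => lt_jq //.
  + by rewrite h_deg //; lia.
  + by rewrite h_deg //; lia.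
  + by apply: h_sym; lia.
- have [le_qi le_qSi] : (q <= i)%N /\ (q <= i.+1)%N by lia.
  rewrite !ltnNge le_qi le_qSi /= subSn //.
  case: (ltnP j q) => lt_jq; first by rewrite !h_deg //; lia.
  by apply: (h_dec _ (j - q)%N); lia.
Qed.

Lemma palindromic_unimodalMn2 h n :
  palindromic_unimodal h n -> palindromic_unimodal (h *+ 2) n.
Proof.
case=> h_deg h_sym h_dec; split=> [i lt_ni|i j ij|i j ij le_ji]; rewrite !coefMn.
- by rewrite h_deg.
- by rewrite (h_sym _ _ ij).
- by rewrite lerMn2r /= (h_dec _ _ ij le_ji).
Qed.

Lemma palindromic_unimodalM1X h n :
  palindromic_unimodal h n -> palindromic_unimodal (h * (1 + 'X)) n.+1.
Proof.
have coefM1X i : (h * (1 + 'X))`_i = h`_i + (if i is i'.+1 then h`_i' else 0).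
  by rewrite mulrDr mulr1 coefD coefMX; case: i.
case=> h_deg h_sym h_dec; split=> [i lt_ni|i j ij|i j ij le_ji]; rewrite !coefM1X.
- by case: i lt_ni => [//|i] lt_ni; rewrite !h_deg ?addr0 //; lia.
- case: i ij => [|i]; case: j => [|j] ij /=.
  + by lia.
  + by rewrite (h_deg j.+1) ?add0r ?addr0; [apply: h_sym|]; lia.
  + by rewrite (h_deg i.+1) ?add0r ?addr0; [apply: h_sym|]; lia.
  + by rewrite (h_sym i.+1 j) ?(h_sym i j.+1) 1?addrC //; lia.
- case: i ij le_ji => [|i] ij le_ji; first by lia.
  apply: lerD.
    case: j ij le_ji => [|j] ij le_ji; first by rewrite !h_deg //; lia.
    by apply: (h_dec _ j); lia.
  case: (ltnP j i.+1) => lt_ji; first by apply: (h_dec _ j); lia.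
  by rewrite (h_sym i.+1 i) //; lia.
Qed.

Lemma palindromic_unimodalM_balanced h n p q :
  (p <= q.+1)%N -> (q <= p.+1)%N -> palindromic_unimodal h n ->
  palindromic_unimodal (h * ('X^p + 'X^q)) (n + p + q).
Proof.
move=> le_pq le_qp h_pu.
wlog le_qp' : p q le_pq le_qp / (q <= p)%N => [sym|].
  have [|/ltnW le_pq'] := leqP q p; first exact: sym.
  by rewrite addrC -addnA [(p + q)%N]addnC addnA; apply: sym.
have [->|lt_qp] := eqVneq p q.
  rewrite -mulr2n mulrnAr (_ : (n + q + q)%N = n + 2 * q)%N; last by lia.
  exact/palindromic_unimodalMn2/palindromic_unimodalMXn.
have -> : p = q.+1 by lia.
rewrite (_ : (n + q.+1 + q)%N = (n + 2 * q).+1); last by lia.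
rewrite (_ : h * _ = h * 'X^q * (1 + 'X)); last by rewrite exprSr; ring.
exact/palindromic_unimodalM1X/palindromic_unimodalMXn.
Qed.

Lemma balanced_of_upper_nonincreasing p q :
  upper_nonincreasing ('X^p + 'X^q) (p + q) -> (p <= q.+1)%N && (q <= p.+1)%N.
Proof.
have coefXX i : ('X^p + 'X^q : {poly int})`_i = ((i == p) + (i == q))%N%:R.
  by rewrite coefD !coefXn natrD.
move=> dec; apply/negPn/negP; rewrite negb_and -!ltnNge => /orP[lt_qp|lt_pq].
  by move: (dec p.-1 q.+1); rewrite !coefXX ler_nat; lia.
by move: (dec q.-1 p.+1); rewrite !coefXX ler_nat; lia.
Qed.

(* The factor [1 + X] fills the gap of [X^(r+2) + X^r]: the product is
   [X^r + X^(r+1) + X^(r+2) + X^(r+3)]. *)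
Lemma palindromic_unimodal_gap_filled r :
  palindromic_unimodal ((1 + 'X) * ('X^(r.+2) + 'X^r)) (2 * r + 3).
Proof.
have coefE i : ((1 + 'X) * ('X^(r.+2) + 'X^r) : {poly int})`_i =
    ((i == r) + (i == r.+1) + (i == r.+2) + (i == r.+3))%N%:R.
  have -> : (1 + 'X) * ('X^(r.+2) + 'X^r) =
      'X^r + 'X^(r.+1) + 'X^(r.+2) + 'X^(r.+3) :> {poly int}.
    by rewrite !exprS; ring.
  by rewrite !coefD !coefXn !natrD.
split=> [i lt_ni|i j ij|i j ij le_ji]; rewrite !coefE.
- by apply/eqP; rewrite pnatr_eq0; apply/eqP; lia.
- by congr _%:R; lia.
- by rewrite ler_nat; lia.
Qed.

Lemma two_s_positiveP (W : finType) (e : rel W) :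
  two_s_positive e <-> upper_nonincreasing (bicolour_poly e [set: W]) #|W|.
Proof.
rewrite /two_s_positive; split=> [pos i [|j] ij le_ji|dec a b le_ba].
- by rewrite bicolour_poly_coef_gt ?bicolour_poly_coef_ge0 // cardsT; lia.
- by move: (pos i j.+1 le_ji); rewrite schur2_coef_chromE ij eqxx subr_ge0.
- rewrite schur2_coef_chromE; case: ifP => [/eqP ab|_] //.
  case: b le_ba ab => [|b] le_ba ab; first exact: bicolour_poly_coef_ge0.
  by rewrite subr_ge0; apply: (dec a b.+1).
Qed.

Section ProductOverComponents.
Variables (T : finType) (e : rel T).
Hypothesis e_sym : ssrbool.symmetric e.

Lemma palindromic_unimodalM_component h n x :
  two_s_positive (induced e (component e x)) -> palindromic_unimodal h n ->
  palindromic_unimodal (h * bicolour_poly e (component e x)) (n + #|component e x|).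
Proof.
move=> /two_s_positiveP; rewrite bicolour_poly_induced card_sig.
set K := component e x; rewrite (eq_card (B := K)) // => K_dec h_pu.
have [->|[p le_pK BK]] := bicolour_poly_componentP e_sym x.
  by rewrite mulr0; apply: palindromic_unimodal0.
rewrite -/K in le_pK BK; rewrite BK in K_dec *.
move: K_dec; move: (#|K| - p)%N (subnKC le_pK) => q <- K_dec; rewrite addnA.
case/andP: (balanced_of_upper_nonincreasing K_dec) => le_pq le_qp.
exact: palindromic_unimodalM_balanced.
Qed.

Lemma palindromic_unimodalM_closed (U : {set T}) h n :
  closed e U ->
  (forall x, x \in U -> two_s_positive (induced e (component e x))) ->
  palindromic_unimodal h n ->
  palindromic_unimodal (h * bicolour_poly e U) (n + #|U|).
Proof.
move: {2}#|U| (leqnn #|U|) => m; elim: m U h n => [|m IHm] U h n le_Um U_closed U_pos h_pu.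
  move: le_Um; rewrite leqn0 cards_eq0 => /eqP->.
  by rewrite bicolour_poly0 mulr1 cards0 addn0.
have [->|[x xU]] := set_0Vmem U; first by rewrite bicolour_poly0 mulr1 cards0 addn0.
set K := component e x; have K_closed := component_closed e_sym x.
have sKU : K \subset U.
  apply/subsetP => y; rewrite inE => xy.
  by rewrite -(closed_connect U_closed xy).
rewrite (bicolour_polyID e_sym U K_closed) (setIidPr sKU) mulrA.
rewrite -(cardsID K U) (setIidPr sKU) addnA; apply: IHm.
- have : (0 < #|K|)%N by apply/card_gt0P; exists x; apply: component_refl.
  by move: le_Um; rewrite -(cardsID K U) (setIidPr sKU) -/K; lia.
- move=> y z yz; rewrite !in_setD (U_closed _ _ yz).
  by have -> : (y \in K) = (z \in K) := K_closed _ _ yz.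
- by move=> y /setDP[/U_pos].
- exact: palindromic_unimodalM_component (U_pos _ xU) h_pu.
Qed.

Lemma bipartite_sizes_card C p q : bipartite_sizes e C p q -> #|C| = (p + q)%N.
Proof. by case=> A [sAC <- <- _]; rewrite -(cardsID A C) (setIidPr sAC). Qed.

Lemma isolated_notin_component x C :
  (forall y, ~~ e x y) -> is_component e C -> (1 < #|C|)%N -> x \notin C.
Proof.
move=> x_iso [x0 ->]; apply: contraTN; rewrite inE => x0x.
have -> : [set y | connect e x0 y] = component e x.
  by apply/setP => y; rewrite !inE (same_connect (sym_connect_sym e_sym) x0x).
by rewrite component_isolated // cards1.
Qed.

Lemma two_s_positive_of_isolated x C r :
  (forall y, ~~ e x y) -> is_component e C -> bipartite_sizes e C r.+2 r ->
  (forall C', is_component e C' -> C' != C -> two_s_positive (induced e C')) ->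
  two_s_positive e.
Proof.
move=> x_iso C_comp C_bip others_pos.
have cardC := bipartite_sizes_card C_bip.
have xC : x \notin C by apply: isolated_notin_component; rewrite ?cardC.
set S := x |: C.
have BS : bicolour_poly e S = (1 + 'X) * ('X^(r.+2) + 'X^r).
  rewrite bicolour_polyU ?bicolour_poly_isolated ?disjoints1 //.
    by rewrite (bicolour_poly_bipartite e_sym C_comp C_bip).
  by move=> y z; rewrite inE => /eqP-> _.
have C_closed : closed e C by case: C_comp => x0 ->; apply: component_closed.
have S_closed : closed e S.
  move=> y z yz; rewrite !in_setU1 (C_closed _ _ yz).
  have [yx|_] := eqVneq y x; first by rewrite yx (negbTE (x_iso z)) in yz.
  have [zx|//] := eqVneq z x; by rewrite zx e_sym (negbTE (x_iso y)) in yz.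
have SC_closed : closed e (~: S).
  by move=> y z yz; rewrite !in_setC (S_closed _ _ yz).
have SC_pos y : y \in ~: S -> two_s_positive (induced e (component e y)).
  rewrite in_setC => yS; apply: others_pos; first by exists y.
  by apply: contraNneq yS => yC; rewrite in_setU1 -yC component_refl orbT.
have [_ _] := palindromic_unimodalM_closed SC_closed SC_pos
  (palindromic_unimodal_gap_filled r).
rewrite -BS -setTD -[S in bicolour_poly e S]setTI -(bicolour_polyID e_sym _ S_closed).
have cardS : #|S| = (2 * r + 3)%N by rewrite cardsU1 xC cardC; lia.
by rewrite setTD -cardS cardsC => dec; apply/two_s_positiveP.
Qed.

End ProductOverComponents.

Lemma clan_rel_sym (V : finType) (e : rel V) (alpha : V -> nat) :
  ssrbool.symmetric e -> ssrbool.symmetric (clan_rel e alpha).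
Proof. by move=> e_sym x y; rewrite /clan_rel eq_sym [x == y]eq_sym e_sym. Qed.

Theorem mainTheorem14 (V : finType) (e : rel V) (alpha : V -> nat)
    (HF : forest e)
    (Hnot : ~ two_s_positive (clan_rel e alpha))
    (C : {set clan_vertex alpha})
    (HC : is_component (clan_rel e alpha) C)
    (HCnot : ~ two_s_positive (induced (clan_rel e alpha) C))
    (Huniq : forall C' : {set clan_vertex alpha},
        is_component (clan_rel e alpha) C' -> C' != C ->
        two_s_positive (induced (clan_rel e alpha) C'))
    (r : nat) (Hr : (1 <= r)%N)
    (Hbip : bipartite_sizes (clan_rel e alpha) C r.+2 r) :
  no_isolated (clan_rel e alpha).
Proof.
have [[e_sym _] _] := HF.
move=> x; have [y xy|x_iso] := pickP (clan_rel e alpha x); first by exists y.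
have x_iso' y : ~~ clan_rel e alpha x y by rewrite x_iso.
have clan_sym := clan_rel_sym (alpha := alpha) e_sym.
by case: Hnot; exact: (two_s_positive_of_isolated clan_sym x_iso' HC Hbip Huniq).
Qed.
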